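(* Let $\mathcal{D}$ be a finite domain of search histories with $|\mathcal{D}|\ge 2$ and $U\ge 1$. Algorithm $\hat{\mathcal{A}}$ is $(\epsilon',1/(|\mathcal{D}|-1))$-indistinguishable for all $\epsilon'>0$, but it is not $(\epsilon,\delta)$-probabilistic differentially private for any $\epsilon$ and any $\delta<1$.
   Context: A search log is an element $S=(S_1,\dots,S_U)\in\mathcal{D}^U$, where $S_i$ is user $i$'s search history; two search logs are neighboring if they differ in exactly one user's history. Algorithm $\hat{\mathcal{A}}$, on input $S$, samples uniformly at random an element of $\mathcal{D}\setminus\{S_1\}$ and returns it. An algorithm $\mathcal{A}$ with output space $\Omega$ is $(\epsilon,\delta)$-indistinguishable if for all neighboring $S,S'$ and all $\mathcal{O}\subseteq\Omega$: $\Pr[\mathcal{A}(S)\in\mathcal{O}]\le e^{\epsilon}\Pr[\mathcal{A}(S')\in\mathcal{O}]+\delta$. $\mathcal{A}$ is $(\epsilon,\delta)$-probabilistic differentially private if for every search log $S$ the output space $\Omega$ can be partitioned into $\Omega_1,\Omega_2$ with (1) $\Pr[\mathcal{A}(S)\in\Omega_2]\le\delta$ and (2) for all neighboring $S'$ and all $O\in\Omega_1$: $e^{-\epsilon}\Pr[\mathcal{A}(S')=O]\le\Pr[\mathcal{A}(S)=O]\le e^{\epsilon}\Pr[\mathcal{A}(S')=O]$. *)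

From HB Require Import structures.
From mathcomp Require Import all_boot all_order all_algebra.
From mathcomp Require Import reals.
From mathcomp Require Import sequences exp.
Set Implicit Arguments. Unset Strict Implicit. Unset Printing Implicit Defensive.
Import Order.TTheory GRing.Theory Num.Theory.
Local Open Scope ring_scope.

(* A search log: the histories S_1..S_U of U users, each in domain D.
   User i (1-based in the paper) is index i-1 : 'I_U. *)
Definition search_log (D : finType) (U : nat) := {ffun 'I_U -> D}.

Definition neighboring (D : finType) (U : nat) (S S' : search_log D U) : Prop :=
  #|[set i | S i != S' i]| = 1%N.

(* A (randomized) algorithm on search logs with finite output space Omega is
   given by its output distribution: A S o = Pr[A(S) = o]. *)
Definition algorithm (R : realType) (D : finType) (U : nat) (Omega : finType) :=
  search_log D U -> {ffun Omega -> R}.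

Definition prob (R : realType) (Omega : finType) (p : {ffun Omega -> R})
  (O : {set Omega}) : R := \sum_(o in O) p o.

Definition indistinguishable (R : realType) (D : finType) (U : nat)
  (Omega : finType) (eps delta : R) (A : algorithm R D U Omega) : Prop :=
  forall S S' : search_log D U, neighboring S S' ->
  forall O : {set Omega},
    prob (A S) O <= expR eps * prob (A S') O + delta.

Definition probabilistic_dp (R : realType) (D : finType) (U : nat)
  (Omega : finType) (eps delta : R) (A : algorithm R D U Omega) : Prop :=
  forall S : search_log D U,
  exists Omega1 Omega2 : {set Omega},
    [/\ Omega1 :|: Omega2 = setT, Omega1 :&: Omega2 = set0,
        prob (A S) Omega2 <= delta &
        forall S' : search_log D U, neighboring S S' ->
        forall o, o \in Omega1 ->
          expR (- eps) * A S' o <= A S o /\ A S o <= expR eps * A S' o].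

(* Algorithm A-hat: output a uniformly random element of D \ {S_1}.
   Requires U >= 1 so that user 1 exists. *)
Definition Ahat (R : realType) (D : finType) (U : nat) (hU : (0 < U)%N)
  : algorithm R D U D :=
  fun S => [ffun o => if o == S (Ordinal hU) then 0
                      else ((#|D| - 1)%N%:R)^-1].

(* Ahat moves at most the mass 1/(|D|-1) of the single point S'_1 when S_1 is
   replaced by S'_1, which gives indistinguishability with that delta for any
   nonnegative eps.  Probabilistic differential privacy fails because every
   output o of positive probability on S has probability 0 on the neighbor of
   S whose first history is o, so the multiplicative bound must fail on all of
   the support and Omega_2 has probability 1. *)
From HB Require Import structures.
From mathcomp Require Import all_boot all_order all_algebra.
From mathcomp Require Import reals.
From mathcomp Require Import sequences exp.
Set Implicit Arguments. Unset Strict Implicit. Unset Printing Implicit Defensive.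
Import Order.TTheory GRing.Theory Num.Theory.
Local Open Scope ring_scope.

Section Prob.
Variables (R : realType) (Omega : finType).
Implicit Types (f g : {ffun Omega -> R}) (O : {set Omega}).

Lemma prob_partition f O1 O2 :
  O1 :|: O2 = setT -> O1 :&: O2 = set0 -> prob f setT = prob f O1 + prob f O2.
Proof.
move=> O12T O12disj; rewrite -O12T /prob -bigU /=.
  by apply: eq_bigl => o; rewrite !inE.
by rewrite -setI_eq0 O12disj.
Qed.

Lemma prob_neq0 f O : prob f O != 0 -> exists2 o, o \in O & f o != 0.
Proof.
move=> probO; apply/exists_inP; apply: contraNT probO.
rewrite negb_exists_in => /forall_inP f0.
by apply/eqP; rewrite /prob big1 // => o /f0 /negPn /eqP.
Qed.

Lemma prob_le_except_point f g O x c :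
  (forall o, o != x -> f o <= g o) -> f x <= g x + c -> 0 <= c ->
  prob f O <= prob g O + c.
Proof.
move=> fg_off fg_x c_ge0; rewrite /prob.
have [xO|xNO] := boolP (x \in O).
  rewrite !(bigD1 x xO) /= addrAC; apply: lerD => //.
  by apply: ler_sum => o /andP[_ /fg_off].
rewrite -[leLHS]addr0; apply: lerD => //; apply: ler_sum => o oO.
by apply: fg_off; apply: contraNneq xNO => <-.
Qed.

End Prob.

Section PDP.
Variables (R : realType) (D : finType) (U : nat) (Omega : finType).

Definition set_user (S : search_log D U) (i : 'I_U) (x : D) : search_log D U :=
  [ffun j => if j == i then x else S j].

Lemma set_user_at (S : search_log D U) i x : set_user S i x i = x.
Proof. by rewrite ffunE eqxx. Qed.

Lemma neighboring_set_user (S : search_log D U) i x :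
  x != S i -> neighboring S (set_user S i x).
Proof.
move=> xSi; rewrite /neighboring -(cards1 i); congr #|pred_of_set _|.
apply/setP => j; rewrite !inE ffunE.
by case: (eqVneq j i) => [->|]; rewrite ?eqxx // eq_sym.
Qed.

Lemma not_probabilistic_dp (A : algorithm R D U Omega) (S : search_log D U)
    (eps delta : R) :
  prob (A S) setT = 1 ->
  (forall o, A S o != 0 -> exists2 S', neighboring S S' & A S' o = 0) ->
  delta < 1 -> ~ probabilistic_dp eps delta A.
Proof.
move=> AS1 killed delta_lt1 /(_ S) [O1 [O2 [O12T O12disj probO2 bound]]].
have /prob_neq0 [o oO1 ASo] : prob (A S) O1 != 0.
  apply: contra_ltN delta_lt1 => /eqP probO1.
  by rewrite -AS1 (prob_partition (A S) O12T O12disj) probO1 add0r.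
have [S' SS' AS'o] := killed o ASo.
have [] := bound S' SS' o oO1; rewrite AS'o !mulr0 => ASo_ge0 ASo_le0.
by move: ASo; rewrite eq_le ASo_le0 ASo_ge0.
Qed.

End PDP.

Section Ahat.
Variables (R : realType) (D : finType) (U : nat).
Hypotheses (hD : (2 <= #|D|)%N) (hU : (0 < U)%N).

Local Notation first_user := (Ordinal hU).
Local Notation mass := (((#|D| - 1)%N%:R)^-1 : R).
Local Notation Ahat := (@Ahat R D U hU).

Lemma mass_gt0 : 0 < mass.
Proof. by rewrite invr_gt0 ltr0n subn_gt0. Qed.

Lemma Ahat_first (S : search_log D U) : Ahat S (S first_user) = 0.
Proof. by rewrite ffunE eqxx. Qed.

Lemma Ahat_other (S : search_log D U) o : o != S first_user -> Ahat S o = mass.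
Proof. by rewrite ffunE => /negbTE ->. Qed.

Lemma Ahat_le_mass (S : search_log D U) o : Ahat S o <= mass.
Proof. by rewrite ffunE; case: ifP => // _; rewrite ltW ?mass_gt0. Qed.

Lemma prob_Ahat_ge0 (S : search_log D U) O : 0 <= prob (Ahat S) O.
Proof.
apply: sumr_ge0 => o _; rewrite ffunE; case: ifP => // _.
by rewrite ltW ?mass_gt0.
Qed.

Lemma prob_Ahat_setT (S : search_log D U) : prob (Ahat S) setT = 1.
Proof.
rewrite /prob (bigD1 (S first_user)) //= Ahat_first add0r.
rewrite (eq_bigr (fun=> mass)) => [|o /andP[_]]; last exact: Ahat_other.
rewrite sumr_const.
have -> : #|[pred o in setT | o != S first_user]| = (#|D| - 1)%N.
  by rewrite subn1 -(cardC1 (S first_user)); apply: eq_card => o; rewrite !inE.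
by rewrite -(mulr_natr mass) mulVf // pnatr_eq0 -lt0n subn_gt0.
Qed.

Lemma prob_Ahat_le (S S' : search_log D U) O :
  prob (Ahat S) O <= prob (Ahat S') O + mass.
Proof.
apply: (@prob_le_except_point _ _ _ _ _ (S' first_user)) => [o oS'||].
- by rewrite [leRHS]Ahat_other //; apply: Ahat_le_mass.
- by rewrite Ahat_first add0r; apply: Ahat_le_mass.
- by rewrite ltW ?mass_gt0.
Qed.

Lemma Ahat_indistinguishable (eps : R) : 0 <= eps ->
  indistinguishable eps mass Ahat.
Proof.
move=> eps_ge0 S S' _ O; apply: le_trans (prob_Ahat_le S S' O) _.
by rewrite lerD2r ler_peMl ?prob_Ahat_ge0 // -expR0 ler_expR.
Qed.

Lemma Ahat_killed_by_neighbor (S : search_log D U) o : Ahat S o != 0 ->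
  exists2 S', neighboring S S' & Ahat S' o = 0.
Proof.
move=> ASo; have oS : o != S first_user.
  by apply: contraNneq ASo => ->; rewrite Ahat_first.
exists (set_user S first_user o); first exact: neighboring_set_user.
by rewrite -{2}(set_user_at S first_user o) Ahat_first.
Qed.

End Ahat.

Theorem corollary13 (R : realType) (D : finType) (U : nat)
  (hD : (2 <= #|D|)%N) (hU : (0 < U)%N) :
  (forall eps' : R, 0 < eps' ->
     indistinguishable eps' ((#|D| - 1)%N%:R)^-1 (@Ahat R D U hU))
  /\
  (forall eps delta : R, delta < 1 ->
     ~ probabilistic_dp eps delta (@Ahat R D U hU)).
Proof.
split=> [eps eps_gt0|eps delta].
  exact: (Ahat_indistinguishable hD hU (ltW eps_gt0)).
have /card_gt0P [d0 _] : (0 < #|D|)%N by apply: leq_trans hD.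
apply: (not_probabilistic_dp (S := [ffun=> d0])).
- exact: prob_Ahat_setT.
- exact: Ahat_killed_by_neighbor.
Qed.
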